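(* Let $a,b$ be positive integers and define the sequence $(U_n)_{n\ge1}$ by $U_1=a$, $U_2=b$ and $U_{n+2}=U_{n+1}+U_n$ for $n\ge1$. Then $(U_n)$ is exactly realizable if and only if $b=3a$.
   Context: For a homeomorphism $f:X\to X$ of a compact metric space $X$, let $\mathrm{Per}_n(f)=\#\{x\in X\mid f^n x=x\}$. A sequence $(U_n)_{n\ge1}$ of non-negative integers is called exactly realizable if there exist a compact metric space $X$ and a homeomorphism $f:X\to X$ with $\mathrm{Per}_n(f)=U_n$ for all $n\ge1$ (in particular each $\mathrm{Per}_n(f)$ is finite). *)

From HB Require Import structures.
From mathcomp Require Import all_boot all_order all_algebra.
From mathcomp Require Import all_classical all_reals all_analysis.
Set Implicit Arguments. Unset Strict Implicit. Unset Printing Implicit Defensive.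
Import Order.TTheory GRing.Theory Num.Theory.
Local Open Scope classical_set_scope.

Definition per_set (X : Type) (f : X -> X) (n : nat) : set X :=
  [set x | iter n f x = x].

Definition homeomorphism (X : topologicalType) (f : X -> X) : Prop :=
  exists g : X -> X, [/\ cancel f g, cancel g f, continuous f & continuous g].

Definition exactly_realizable (R : realType) (U : nat -> nat) : Prop :=
  exists (X : metricType R) (f : X -> X),
    [/\ compact [set: X], homeomorphism f &
        forall n : nat, (0 < n)%N -> card_eq (per_set f n) `I_(U n)].

(* Necessity: for an injective map, the points of least period 2^(k+1) come in orbits of
   that length, so Per_(2^(k+1)) = Per_(2^k) mod 2^(k+1).  By induction
   U_n = a L_n + (b - 3a) F_(n-1), where L_n, the number of cyclic binary words of length n
   without two adjacent 1s, is the Lucas sequence; L satisfies the same congruences since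
   it counts the periodic points of the golden mean shift.  Exactly one of 2^(k+1) - 1 and
   2^k - 1 is divisible by 3, so F_(2^(k+1)-1) - F_(2^k-1) is odd, hence 2^(k+1) divides
   b - 3a for every k, and b = 3a.
   Sufficiency: U_n = a L_n is realized by a coloured copies of the periodic points of the
   golden mean shift, made compact by letting them accumulate at a single fixed point. *)

From HB Require Import structures.
From mathcomp Require Import all_boot all_order all_algebra finmap.
From mathcomp Require Import all_classical all_reals all_analysis.
From mathcomp Require Import zify ring.
Set Implicit Arguments. Unset Strict Implicit. Unset Printing Implicit Defensive.
Import Order.TTheory GRing.Theory Num.Theory.
Local Open Scope classical_set_scope.
Local Open Scope card_scope.

(** * Dold congruences *)

Lemma iter_order_dvdn (T : finType) (s : T -> T) x t : injective s ->
  (iter t s x == x) = (order s x %| t).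
Proof.
move=> s_inj; have iter_mul q : iter (q * order s x) s x = x.
  by rewrite iterM iter_fix // (iter_order s_inj).
apply/eqP/idP => [fix_x|/dvdnP[q ->] //].
have fix_mod : iter (t %% order s x) s x = x.
  by move: fix_x; rewrite {1}(divn_eq t (order s x)) addnC iterD iter_mul.
have := findex_iter (ltn_pmod t (order_gt0 s x)).
by rewrite fix_mod /findex /orbit -orderSpred /= eqxx /dvdn => <-.
Qed.

Lemma dvdn_card_nonfix_iter (T : finType) (s : T -> T) p k :
  prime p -> injective s -> (forall x, iter (p ^ k.+1) s x = x) ->
  p ^ k.+1 %| #|[pred x | iter (p ^ k) s x != x]|.
Proof.
move=> p_pr s_inj sN; set C := [pred x | _].
have C_order : C \subset order_set s (p ^ k.+1).
  apply/fintype.subsetP => x; rewrite !inE (iter_order_dvdn _ _ s_inj).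
  have /dvdn_pfactor[// | j j_le ox] : order s x %| p ^ k.+1.
    by rewrite -(iter_order_dvdn _ _ s_inj) sN.
  rewrite ox dvdn_Pexp2l ?prime_gt1 // eqn_exp2l ?prime_gt1 //; lia.
have C_closed : fclosed s C.
  by move=> x _ /eqP <-; rewrite !inE -iterSr iterS (inj_eq s_inj).
by rewrite -(fcard_order_set s_inj C_order C_closed) dvdn_mull.
Qed.

Definition dold_at p (U : nat -> nat) :=
  forall k, exists m, U (p ^ k.+1) = U (p ^ k) + m * p ^ k.+1.

Lemma dold_prime_power (T : choiceType) (f : T -> T) (U : nat -> nat) p :
  injective f -> prime p -> (forall n, 0 < n -> per_set f n #= `I_(U n)) ->
  dold_at p U.
Proof.
move=> f_inj p_pr HU k; set N := p ^ k.+1; set M := p ^ k.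
have M_gt0 : 0 < M by rewrite expn_gt0 prime_gt0.
have N_gt0 : 0 < N by rewrite expn_gt0 prime_gt0.
have finP n : 0 < n -> finite_set (per_set f n).
  by move=> n_gt0; apply/finite_setP; exists (U n); apply: HU.
have [finM finN] := (finP M M_gt0, finP N N_gt0).
pose A := fset_set (per_set f N).
have inA y : (y \in A) = (iter N f y == y).
  by rewrite in_fset_set //; apply/idP/eqP => [/set_mem|/mem_set].
have sA (x : A) : f (val x) \in A.
  by rewrite inA -iterSr iterS (inj_eq f_inj) -inA (valP x).
pose s (x : A) : A := FSetSub (sA x).
have s_inj : injective s by move=> x y /(congr1 val) /f_inj /val_inj.
have val_iter j x : val (iter j s x) = iter j f (val x) by elim: j => //= j ->.
have sN x : iter N s x = x.
  by apply: val_inj; rewrite val_iter; apply/eqP; rewrite -inA (valP x).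
have [m Cm] := dvdnP (dvdn_card_nonfix_iter p_pr s_inj sN).
pose Q := fsub A (fset_set (per_set f M)).
have inQ x : (x \in Q) = (iter M s x == x).
  rewrite in_fsub in_fset_set // -(inj_eq val_inj) val_iter.
  by apply/idP/eqP => [/set_mem|/mem_set].
have cardQ : #|Q| = U M.
  rewrite card_fsub ?(card_fset_set (HU M M_gt0)) //.
  apply/fsubsetP => y; rewrite !in_fset_set // => /set_mem fix_y.
  by apply/mem_set; rewrite /per_set /= /N expnS iterM iter_fix.
exists m; rewrite -(card_fset_set (HU N N_gt0)) cardfE -cardQ -Cm -(cardC Q).
by congr addn; apply: eq_card => x; rewrite !inE -(inQ x) in_fsub.
Qed.

Fixpoint fib n := if n is n'.+1 then (if n' is n''.+1 then fib n' + fib n'' else 1) else 0.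

Lemma odd_fib n : odd (fib n) = ~~ (3 %| n).
Proof.
suff : odd (fib n) = ~~ (3 %| n) /\ odd (fib n.+1) = ~~ (3 %| n.+1) by case.
elim: n => [|n [IHn IHSn]] //; split => //=; rewrite oddD IHn IHSn; lia.
Qed.

Lemma dvdn3_pred_exp2 k : (3 %| (2 ^ k.+1).-1) (+) (3 %| (2 ^ k).-1).
Proof.
have : ~~ (3 %| 2 ^ k) by rewrite Euclid_dvdX.
by rewrite expnS; move: (2 ^ k) (expn_gt0 2 k) => x; lia.
Qed.

Lemma fib_recE (R : pzSemiRingType) (V : nat -> R) :
  V 1 = 0%R -> (forall n, 0 < n -> V n.+2 = (V n.+1 + V n)%R) ->
  forall n, 0 < n -> V n = (V 2 * (fib n.-1)%:R)%R.
Proof.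
move=> V1 VSS; suff VE n : V n.+1 = (V 2 * (fib n)%:R)%R /\ V n.+2 = (V 2 * (fib n.+1)%:R)%R.
  by case=> // n _; case: (VE n).
elim: n => [|n [IHn IHSn]]; first by rewrite V1 mulr0 mulr1.
by split => //; rewrite VSS // IHn IHSn -mulrDr -natrD.
Qed.

Lemma odd_distn (m n : nat) : odd `|m - n| = odd (m + n).
Proof.
have [le_mn|/ltnW le_nm] := leqP m n.
  by rewrite distnEr // oddB // oddD addbC.
by rewrite distnEl // oddB // oddD.
Qed.

Lemma pow_dvdn_eq0 p m : 1 < p -> (forall k, p ^ k %| m) -> m = 0.
Proof.
move=> p_gt1 dvd_m; apply/eqP; apply: contraT; rewrite -lt0n => m_gt0.
by have := dvdn_leq m_gt0 (dvd_m m); rewrite leqNgt ltn_expl.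
Qed.

(** * Cyclic golden words *)

Fixpoint bool_words n : seq (seq bool) :=
  if n is n'.+1 then
    [seq true :: w | w <- bool_words n'] ++ [seq false :: w | w <- bool_words n']
  else [:: [::]].

Lemma bool_wordsS n :
  bool_words n.+1 = [seq true :: w | w <- bool_words n] ++ [seq false :: w | w <- bool_words n].
Proof. by []. Qed.

Lemma mem_bool_words n w : (w \in bool_words n) = (size w == n).
Proof.
elim: n w => [|n IHn] [|b w] //=; rewrite mem_cat.
  by apply/negbTE; rewrite negb_or; apply/andP; split; apply/mapP => -[].
rewrite eqSS -IHn; apply/orP/idP => [[] /mapP[v v_in [_ ->]] //|w_in].
by case: b; [left | right]; apply/mapP; exists w.
Qed.

Lemma bool_words_uniq n : uniq (bool_words n).
Proof.
have cons_inj (b : bool) : injective (cons b) by move=> ? ? [].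
elim: n => //= n IHn; rewrite cat_uniq !(map_inj_uniq (cons_inj _)) IHn andbT /=.
by apply/hasPn => _ /mapP[v _ ->]; apply/mapP => -[].
Qed.

Fixpoint golden (w : seq bool) : bool :=
  if w is b :: w' then ~~ (b && head false w') && golden w' else true.

Lemma goldenP w :
  reflect (forall j, j.+1 < size w -> ~~ (nth false w j && nth false w j.+1)) (golden w).
Proof.
elim: w => [|b w IHw] /=; first by constructor.
apply: (iffP andP) => [[bw /IHw gw] [|j] /=|gbw]; last 1 first.
- split; last by apply/IHw => j; apply: (gbw j.+1).
  by case: w gbw {IHw} => [|c w] gbw //=; [rewrite andbF | apply: (gbw 0)].
- by case: w bw {IHw gw} => [|c w] //=; rewrite andbF.
- by rewrite ltnS; apply: gw.
Qed.

Definition golden_cycle w := golden w && ~~ (head false w && last false w).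

Definition ngolden_cycles n := count golden_cycle (bool_words n).

Definition ngolden n h l :=
  count [pred w | [&& golden w, head false w == h & last false w == l]] (bool_words n).

Lemma count_predI_split (T : Type) (a b : pred T) s :
  count a s = count (predI a b) s + count (predI a (predC b)) s.
Proof. by elim: s => //= x s ->; case: (a x) (b x) => -[] /=; rewrite ?addnS ?addn0. Qed.

Lemma ngolden_cyclesE n :
  ngolden_cycles n = ngolden n false false + ngolden n false true + ngolden n true false.
Proof.
rewrite /ngolden_cycles (count_predI_split _ (fun w => ~~ head false w)).
rewrite (count_predI_split (predI _ _) (fun w => ~~ last false w)) /ngolden.
congr (_ + _ + _); apply: eq_count => w /=; rewrite /golden_cycle.
all: by case: (golden w) (head false w) (last false w) => -[] [].
Qed.

Lemma ngoldenSS n h l : ngolden n.+2 h l =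
  if h then ngolden n.+1 false l else ngolden n.+1 false l + ngolden n.+1 true l.
Proof.
have last_cons b w : w \in bool_words n.+1 -> last b w = last false w.
  by rewrite mem_bool_words; case: w.
rewrite /ngolden bool_wordsS count_cat !count_map.
rewrite (eq_in_count (a1 := preim _ _)
  (a2 := [pred w | h && [&& golden w, head false w == false & last false w == l]])); last first.
  by move=> w /last_cons /= ->; case: h (golden w) (head false w) => -[] [].
rewrite [X in _ + X](eq_in_count
  (a2 := [pred w | ~~ h && (golden w && (last false w == l))])); last first.
  by move=> w _ /=; case: h (golden w) => -[].
case: h; first by rewrite [X in _ + X]count_pred0 addn0.
rewrite count_pred0 add0n [LHS](count_predI_split _ (fun w => ~~ head false w)).
congr (_ + _); apply: eq_count => w /=.
all: by case: (golden w) (head false w) (last false w == l) => -[] [].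
Qed.

Lemma ngoldenSSS n h l : ngolden n.+3 h l = ngolden n.+2 h l + ngolden n.+1 h l.
Proof. by case: h; rewrite !ngoldenSS // addnC. Qed.

Lemma ngolden_cyclesSSS n :
  ngolden_cycles n.+3 = ngolden_cycles n.+2 + ngolden_cycles n.+1.
Proof. by rewrite !ngolden_cyclesE !ngoldenSSS; lia. Qed.

Lemma ngolden_cycles1 : ngolden_cycles 1 = 1. Proof. by []. Qed.
Lemma ngolden_cycles2 : ngolden_cycles 2 = 3. Proof. by []. Qed.

Lemma fib_rec_decomp (a b : nat) (U : nat -> nat) :
  U 1 = a -> U 2 = b -> (forall n, 0 < n -> U n.+2 = U n.+1 + U n) ->
  forall n, 0 < n ->
  ((U n)%:Z - a%:Z * (ngolden_cycles n)%:Z = (b%:Z - 3 * a%:Z) * (fib n.-1)%:Z)%R.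
Proof.
move=> U1 U2 USS n n_gt0.
pose V m := ((U m)%:Z - a%:Z * (ngolden_cycles m)%:Z)%R.
have -> : (b%:Z - 3 * a%:Z)%R = V 2 by rewrite /V U2 ngolden_cycles2 mulrC.
rewrite -/(V n) -natz; apply: (@fib_recE _ V) n_gt0 => [|[//|m] _].
  by rewrite /V U1 ngolden_cycles1 mulr1 subrr.
by rewrite /V USS // ngolden_cyclesSSS !PoszD; ring.
Qed.

Lemma dold_fib_rec_eq3 (a b : nat) (U : nat -> nat) :
  U 1 = a -> U 2 = b -> (forall n, 0 < n -> U n.+2 = U n.+1 + U n) ->
  dold_at 2 U -> dold_at 2 ngolden_cycles -> b = 3 * a.
Proof.
move=> U1 U2 USS dU dL; set D := (b%:Z - 3 * a%:Z)%R.
suff /eqP : `|D|%N = 0 by rewrite absz_eq0 subr_eq0 => /eqP; lia.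
apply: (@pow_dvdn_eq0 2) => // -[|k] //.
set N := 2 ^ k.+1; set M := 2 ^ k.
have [[mU eU] [mL eL]] := (dU k, dL k).
have DE : (D * ((fib N.-1)%:Z - (fib M.-1)%:Z) = (mU%:Z - a%:Z * mL%:Z) * N%:Z)%R.
  rewrite mulrBr -!(fib_rec_decomp U1 U2 USS) ?expn_gt0 // eU eL !PoszD !PoszM; ring.
have : N %| `|D| * `|fib N.-1 - fib M.-1| by rewrite -abszM DE abszM dvdn_mull.
rewrite Gauss_dvdl // coprimeXl // coprime2n odd_distn oddD !odd_fib.
by rewrite addNb addbN negbK dvdn3_pred_exp2.
Qed.

(** * Ultrametrics of maximal weight *)

Section MaxWeightDistance.
Local Open Scope ring_scope.
Variables (R : realDomainType) (T : eqType) (w : T -> R).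
Hypothesis w_ge0 : forall x, 0 <= w x.
Hypothesis w_eq0 : forall x y, w x = 0 -> w y = 0 -> x = y.

Definition maxw_dist (x y : T) : R := if x == y then 0 else Num.max (w x) (w y).

Lemma maxw_distxx x : maxw_dist x x = 0.
Proof. by rewrite /maxw_dist eqxx. Qed.

Lemma maxw_distC x y : maxw_dist x y = maxw_dist y x.
Proof. by rewrite /maxw_dist eq_sym maxC. Qed.

Lemma maxw_dist_ge0 x y : 0 <= maxw_dist x y.
Proof. by rewrite /maxw_dist; case: eqP; rewrite // le_max w_ge0. Qed.

Lemma maxw_dist_eq0 x y : maxw_dist x y = 0 -> x = y.
Proof.
rewrite /maxw_dist; case: eqP => // _ /eqP; rewrite eq_le ge_max => /andP[/andP[wx wy] _].
by apply: w_eq0; apply/eqP; rewrite eq_le w_ge0 andbT.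
Qed.

Lemma le_w_maxw_dist x y : x != y -> w x <= maxw_dist x y.
Proof. by rewrite /maxw_dist => /negbTE ->; rewrite le_max lexx. Qed.

Lemma maxw_dist_triangle y x z : maxw_dist x z <= maxw_dist x y + maxw_dist y z.
Proof.
rewrite {1}/maxw_dist; case: eqP => [_|/eqP xz]; first by rewrite addr_ge0 ?maxw_dist_ge0.
rewrite ge_max; apply/andP; split.
  have [<-|xy] := eqVneq x y; first by rewrite maxw_distxx add0r le_w_maxw_dist.
  by rewrite (le_trans (le_w_maxw_dist xy)) // lerDl maxw_dist_ge0.
have [zy|zy] := eqVneq z y.
  by rewrite -zy maxw_distxx addr0 maxw_distC le_w_maxw_dist // eq_sym.
by rewrite (le_trans (le_w_maxw_dist zy)) // maxw_distC lerDr maxw_dist_ge0.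
Qed.

Lemma maxw_dist_w0 p x : w p = 0 -> maxw_dist p x = w x.
Proof.
move=> wp0; rewrite /maxw_dist wp0; case: eqP => [<-|_]; first by rewrite wp0.
by rewrite max_r.
Qed.

Lemma maxw_dist_inj (h : T -> T) : injective h -> (forall x, w (h x) = w x) ->
  forall x y, maxw_dist (h x) (h y) = maxw_dist x y.
Proof. by move=> h_inj wh x y; rewrite /maxw_dist (inj_eq h_inj) !wh. Qed.

End MaxWeightDistance.

Section MetricFacts.
Variable R : realType.
Local Open Scope ring_scope.

Lemma isometry_continuous (X Y : metricType R) (h : X -> Y) :
  (forall x y, mdist (h x) (h y) = mdist x y) -> continuous h.
Proof.
move=> h_iso x; apply/cvg_ballP => e e_gt0; apply/nbhs_ballP; exists e => // y.
by rewrite /= !ballEmdist /= h_iso.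
Qed.

Lemma compact_finite_far (X : metricType R) (p : X) :
  (forall e, 0 < e -> finite_set [set x | e <= mdist p x]) -> compact [set: X].
Proof.
move=> fin_far F PF _; have [cl_p|ncl_p] := pselect (cluster F p); first by exists p.
have [A [B [FA pB AB0]]] : exists A B, [/\ F A, nbhs p B & ~ (A `&` B !=set0)].
  apply: contra_notP ncl_p => no_AB A B FA pB.
  by apply: contra_notP no_AB => AB0; exists A, B.
have [e e_gt0 eB] := (nbhs_ballP _ _).1 pB.
have A_far : A `<=` [set x | e <= mdist p x].
  move=> x Ax /=; rewrite leNgt; apply/negP => pxe; apply: AB0; exists x.
  by split => //; apply: eB; rewrite /= ballEmdist.
have [x [_ cl_x]] := finite_compact (fin_far e e_gt0) PF (filterS A_far FA).
by exists x.
Qed.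

End MetricFacts.

(** * The golden mean shift on its periodic points *)

Definition golden_seq (x : nat -> bool) := forall i, ~~ (x i && x i.+1).

Definition periodic (T : Type) (x : nat -> T) n := forall i, x (i + n) = x i.

Lemma periodic_mod (T : Type) (x : nat -> T) p : periodic x p -> forall i, x i = x (i %% p).
Proof.
move=> x_p i; rewrite {1}(divn_eq i p) addnC.
elim: (i %/ p) => [|q IHq]; first by rewrite mul0n addn0.
by rewrite mulSnr addnA x_p.
Qed.

Lemma periodic_succ (T : Type) (x : nat -> T) p n : 0 < p -> periodic x p ->
  periodic (fun i => x i.+1) n <-> periodic x n.
Proof.
move=> p_gt0 x_p; split=> [xS_n i|x_n i]; last by rewrite -addSn x_n.
rewrite -[LHS]x_p -[RHS]x_p addnAC.
by have := xS_n (i + p).-1; rewrite -addSn prednK // addn_gt0 p_gt0 orbT.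
Qed.

Lemma golden_seq_succ (x : nat -> bool) : golden_seq x -> golden_seq (fun i => x i.+1).
Proof. by move=> x_gold i; apply: x_gold. Qed.

Lemma periodic_succ_ex (T : Type) (x : nat -> T) : (exists2 n, 0 < n & periodic x n) ->
  exists2 n, 0 < n & periodic (fun i => x i.+1) n.
Proof. by case=> n n_gt0 x_n; exists n => // i; rewrite -addSn x_n. Qed.

Lemma golden_cycle_mkseq x n :
  0 < n -> golden_seq x -> periodic x n -> golden_cycle (mkseq x n).
Proof.
case: n => // n _ x_gold x_per; apply/andP; split.
  by apply/goldenP => j; rewrite size_mkseq => j_lt; rewrite !nth_mkseq ?(ltnW j_lt).
by rewrite -nth_last size_mkseq nth_mkseq //= andbC -(x_per 0).
Qed.

Lemma golden_seq_cycle w :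
  golden_cycle w -> golden_seq (fun i => nth false w (i %% size w)).
Proof.
case/andP => /goldenP w_gold w_cyc i /=.
have [/size0nil ->|w_gt0] := posnP (size w); first by rewrite !nth_nil.
rewrite -addn1 -modnDml addn1; set j := i %% size w.
have [j1_lt|j1_ge] := ltnP j.+1 (size w); first by rewrite modn_small //; apply: w_gold.
have j1_eq : j.+1 = size w by apply/eqP; rewrite eqn_leq j1_ge ltn_pmod.
by rewrite j1_eq modnn nth0 -[j]/j.+1.-1 j1_eq nth_last andbC.
Qed.

Lemma periodic_nth_mod (T : Type) (x0 : T) (s : seq T) :
  periodic (fun i => nth x0 s (i %% size s)) (size s).
Proof. by move=> i; rewrite modnDr. Qed.

(* Only periodic points are kept, so that the space is countable; the [c.+1] colours
   multiply every Per_n by [c.+1]. *)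
Record gm_point (c : nat) := GmPoint {
  gm_seq : nat -> bool;
  gm_color : 'I_c.+1;
  gm_golden : golden_seq gm_seq;
  gm_periodic : exists2 n, 0 < n & periodic gm_seq n }.

HB.instance Definition _ c := gen_eqMixin (gm_point c).
HB.instance Definition _ c := gen_choiceMixin (gm_point c).

Section GoldenMeanShift.
Variable c : nat.
Local Notation X := (gm_point c).

Lemma gm_point_eq (u v : X) : gm_seq u = gm_seq v -> gm_color u = gm_color v -> u = v.
Proof.
case: u v => x a x_gold x_per [y b y_gold y_per] /= xy ab; subst y b.
by congr GmPoint; apply: Prop_irrelevance.
Qed.

Definition gm_of_cycle w (a : 'I_c.+1) (w_cyc : golden_cycle w) (w_gt0 : 0 < size w) : X :=
  GmPoint a (golden_seq_cycle w_cyc) (ex_intro2 _ _ (size w) w_gt0 (periodic_nth_mod false w)).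

Definition shift (u : X) : X :=
  GmPoint (gm_color u) (golden_seq_succ (gm_golden u)) (periodic_succ_ex (gm_periodic u)).

Lemma gm_seq_iter n (u : X) : gm_seq (iter n shift u) = fun i => gm_seq u (i + n).
Proof.
elim: n => [|n IHn] /=; first by apply: funext => i; rewrite addn0.
by rewrite IHn; apply: funext => i; rewrite addSnnS.
Qed.

Lemma gm_color_iter n (u : X) : gm_color (iter n shift u) = gm_color u.
Proof. by elim: n => //= n ->. Qed.

Lemma iter_shift_eq n (u : X) : iter n shift u = u <-> periodic (gm_seq u) n.
Proof.
split=> [u_n i|u_n]; first by rewrite -{2}u_n gm_seq_iter.
by apply: gm_point_eq; rewrite ?gm_color_iter // gm_seq_iter; apply: funext => i.
Qed.

Lemma period_ex (u : X) : exists n, (0 < n) && `[< periodic (gm_seq u) n >].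
Proof. by case: (gm_periodic u) => n n_gt0 u_n; exists n; rewrite n_gt0; apply/asboolP. Qed.

Definition period (u : X) := ex_minn (period_ex u).

Lemma period_gt0 (u : X) : 0 < period u.
Proof. by rewrite /period; case: ex_minnP => m /andP[]. Qed.

Lemma periodic_period (u : X) : periodic (gm_seq u) (period u).
Proof. by rewrite /period; case: ex_minnP => m /andP[_ /asboolP]. Qed.

Lemma period_shift (u : X) : period (shift u) = period u.
Proof.
apply: eq_ex_minn => n; congr (_ && `[< _ >]).
by case: (gm_periodic u) => p p_gt0 u_p; apply/propext/(periodic_succ n p_gt0 u_p).
Qed.

Definition unshift (u : X) := iter (period u).-1 shift u.

Lemma shiftK : cancel shift unshift.
Proof.
move=> u; rewrite /unshift period_shift -iterSr prednK ?period_gt0 //.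
exact/iter_shift_eq/periodic_period.
Qed.

Lemma unshiftK : cancel unshift shift.
Proof.
move=> u; rewrite /unshift -iterS prednK ?period_gt0 //.
exact/iter_shift_eq/periodic_period.
Qed.

Lemma shift_inj : injective shift. Proof. exact: can_inj shiftK. Qed.

Definition gm_base : X := @gm_of_cycle [:: false] ord0 isT isT.

Lemma shift_base : shift gm_base = gm_base.
Proof. by apply: gm_point_eq => //=; apply: funext => i; rewrite !modn1. Qed.

Lemma shift_eq_base u : (shift u == gm_base) = (u == gm_base).
Proof. by rewrite -{1}shift_base (inj_eq shift_inj). Qed.

Section Weight.
Variable R : realType.
Local Open Scope ring_scope.

(* For the ultrametric [maxw_dist weight] every point but [gm_base] is isolated, and only
   finitely many points have weight at least [e > 0]: the one-point compactification of a
   countable discrete set. *)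
Definition weight (u : X) : R := if u == gm_base then 0 else (period u).+1%:R^-1.

Lemma weight_ge0 u : 0 <= weight u.
Proof. by rewrite /weight; case: ifP => // _; rewrite invr_ge0 ler0n. Qed.

Lemma weight_eq0 u v : weight u = 0 -> weight v = 0 -> u = v.
Proof.
suff base_w0 x : weight x = 0 -> x = gm_base by move=> /base_w0 -> /base_w0 ->.
by rewrite /weight; case: eqP => // _ /eqP; rewrite invr_eq0 pnatr_eq0.
Qed.

Lemma weight_shift u : weight (shift u) = weight u.
Proof. by rewrite /weight shift_eq_base period_shift. Qed.

Lemma weight_base : weight gm_base = 0.
Proof. by rewrite /weight eqxx. Qed.

Lemma le_weight_period e u : 0 < e -> e <= weight u -> (period u < Num.truncn e^-1)%N.
Proof.
move=> e_gt0; rewrite /weight; case: ifP => _; first by rewrite leNgt e_gt0.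
by rewrite truncn_gt_nat -[X in X <= _]invrK lef_pV2 ?posrE ?invr_gt0 ?ltr0n.
Qed.
End Weight.
End GoldenMeanShift.

Arguments shift {c}.
Arguments gm_base {c}.
Arguments unshift {c}.

Lemma card_set_seq (T : choiceType) (s : seq T) : uniq s -> [set` s] #= `I_(size s).
Proof.
move=> s_uniq.
have -> : [set` s] = [set` seq_fset tt s] by apply: eq_set => x; rewrite seq_fsetE.
by apply/card_eq_fsetP; rewrite size_seq_fset undup_id.
Qed.

Section Counting.
Variable c : nat.
Local Notation X := (gm_point c).

Lemma finite_period_lt M : finite_set [set u : X | period u < M].
Proof.
pose code (u : X) := ([ffun i : 'I_M => gm_seq u i], inord (period u) : 'I_M.+1, gm_color u).
have code_inj : {in [set u : X | period u < M] &, injective code}.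
  move=> u v; rewrite !in_setE /= => u_lt v_lt [seq_uv per_uv col_uv].
  have {}per_uv : period u = period v.
    by move/(congr1 val): per_uv => /=; rewrite !inordK // ltnS ltnW.
  apply: gm_point_eq => //; apply: funext => i.
  rewrite (periodic_mod (periodic_period u)) (periodic_mod (periodic_period v)) -per_uv.
  have i_lt : i %% period u < M := ltn_trans (ltn_pmod i (period_gt0 u)) u_lt.
  by have := congr1 (fun g : {ffun 'I_M -> bool} => g (Ordinal i_lt)) seq_uv; rewrite !ffunE.
by rewrite -(eq_finite_set (inj_card_eq code_inj)); apply: finite_finset.
Qed.

Lemma card_per_shift n : 0 < n -> per_set (@shift c) n #= `I_(ngolden_cycles n * c.+1).
Proof.
move=> n_gt0; pose code (u : X) := (mkseq (gm_seq u) n, gm_color u).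
have code_inj : {in per_set shift n &, injective code}.
  move=> u v; rewrite !in_setE => /iter_shift_eq u_n /iter_shift_eq v_n [seq_uv col_uv].
  apply: gm_point_eq => //; apply: funext => i; rewrite (periodic_mod u_n) (periodic_mod v_n).
  by have := congr1 (nth false ^~ (i %% n)) seq_uv; rewrite !nth_mkseq ?ltn_pmod.
pose s := [seq (w, a) | w <- [seq w <- bool_words n | golden_cycle w], a <- enum 'I_c.+1].
have code_per : code @` per_set shift n = [set` s].
  apply/seteqP; split=> [_ [u /iter_shift_eq u_n <-]|[w a]].
    apply/allpairsP; exists (mkseq (gm_seq u) n, gm_color u); split; rewrite ?mem_enum //.
    rewrite /= mem_filter mem_bool_words size_mkseq eqxx andbT.
    exact: golden_cycle_mkseq (gm_golden u) u_n.
  case/allpairsP => -[w' a'] [/=]; rewrite mem_filter mem_bool_words.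
  move=> /andP[w_cyc /eqP w_n] _ [-> ->].
  subst n; exists (gm_of_cycle a' w_cyc n_gt0); first exact/iter_shift_eq/periodic_nth_mod.
  rewrite /code /=; congr pair; apply: (@eq_from_nth _ false); rewrite size_mkseq // => i i_lt.
  by rewrite nth_mkseq // modn_small.
have s_uniq : uniq s.
  apply: allpairs_uniq; [exact/filter_uniq/bool_words_uniq | exact: enum_uniq |].
  by move=> [? ?] [? ?].
apply: card_eq_trans (card_esym (inj_card_eq code_inj)) _; rewrite code_per.
by have := card_set_seq s_uniq; rewrite size_allpairs size_filter size_enum_ord.
Qed.

End Counting.

Definition gm_space (R : realType) c := gm_point c.

HB.instance Definition _ (R : realType) c := Choice.on (gm_space R c).
HB.instance Definition _ (R : realType) c := @isMetric.Build R (gm_space R c)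
  (maxw_dist (@weight c R)) (maxw_distxx _)
  (maxw_dist_eq0 (@weight_ge0 c R) (@weight_eq0 c R))
  (maxw_distC _) (maxw_dist_triangle (@weight_ge0 c R)).

Section Realization.
Variables (R : realType) (c : nat).
Local Notation X := (gm_space R c).

Lemma gm_mdistE (x y : X) : mdist x y = maxw_dist (@weight c R) x y.
Proof. by []. Qed.

Lemma gm_space_compact : compact [set: X].
Proof.
apply: (@compact_finite_far _ _ (gm_base : X)) => e e_gt0.
apply: sub_finite_set (finite_period_lt c (Num.truncn e^-1)) => u /=.
by rewrite gm_mdistE (maxw_dist_w0 (@weight_ge0 c R)) ?weight_base //; apply: le_weight_period.
Qed.

Lemma shift_homeomorphism : homeomorphism (shift : X -> X).
Proof.
have weight_unshift u : @weight c R (unshift u) = weight R u.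
  by rewrite -{2}(unshiftK u) weight_shift.
exists unshift; split; [exact: shiftK | exact: unshiftK | |]; apply: isometry_continuous.
  by move=> x y; rewrite !gm_mdistE (maxw_dist_inj (@shift_inj c) (@weight_shift c R)).
by move=> x y; rewrite !gm_mdistE (maxw_dist_inj (can_inj (@unshiftK c)) weight_unshift).
Qed.

End Realization.

Lemma dold_ngolden_cycles : dold_at 2 ngolden_cycles.
Proof.
move=> k; have [m] := dold_prime_power (@shift_inj 0) (isT : prime 2) (@card_per_shift 0) k.
by rewrite !muln1; exists m.
Qed.

Theorem theorem1 (R : realType) (a b : nat) (U : nat -> nat) :
  (0 < a)%N -> (0 < b)%N ->
  U 1 = a -> U 2 = b ->
  (forall n : nat, (1 <= n)%N -> U n.+2 = U n.+1 + U n) ->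
  (exactly_realizable R U <-> b = 3 * a).
Proof.
move=> a_gt0 _ U1 U2 USS; split.
  case=> X [f [_ [g [fK _ _ _]] per_f]].
  apply: (dold_fib_rec_eq3 U1 U2 USS) dold_ngolden_cycles.
  exact: dold_prime_power (can_inj fK) _ per_f.
move=> b_eq; case: a a_gt0 U1 b_eq => // c _ U1 b_eq.
exists (gm_space R c), shift; split; [exact: gm_space_compact | exact: shift_homeomorphism |].
move=> n n_gt0; suff -> : U n = ngolden_cycles n * c.+1 by exact: card_per_shift.
by have := fib_rec_decomp U1 U2 USS n_gt0; rewrite b_eq; lia.
Qed.
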